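(* In a public goods economy (as in the context), let $\mathbf{a}$ be an outcome, let $K$ be a path connected component of $\mathbf{D}_{\mathbf{a}}=\{\mathbf{a}'\in[0,1]^n:\mathbf{u}(\mathbf{a})\ge\mathbf{u}(\mathbf{a}')\}$, and let $\mathbf{x}\in K$ lie on the lower envelope of $K$, i.e. there is no $\mathbf{x}'\in K$ with $\mathbf{x}'\lneq\mathbf{x}$. Then for some (possibly empty) set of agents $C\subseteq N$ we have $\mathbf{u}_C(\mathbf{x})=\mathbf{u}_C(\mathbf{a})$ and $\mathbf{x}_{N\setminus C}=\mathbf{0}_{N\setminus C}$.
   Context: Agents $N=\{1,\dots,n\}$; outcomes are vectors in $[0,1]^n$. Vector orderings: $\mathbf{x}\ge\mathbf{y}$ coordinatewise; $\mathbf{x}>\mathbf{y}$ strict in every coordinate; $\mathbf{x}\gneq\mathbf{y}$ means $\mathbf{x}\ge\mathbf{y}$ and $x_j>y_j$ for some $j$ ($\mathbf{x}\lneq\mathbf{y}$ means $\mathbf{y}\gneq\mathbf{x}$). For $C\subseteq N$, $\mathbf{v}_C$ is the restriction of $\mathbf{v}$ to coordinates in $C$. The utility function $\mathbf{u}:[0,1]^n\to[0,1]^n$ is continuous, concave, and has positive externalities: whenever $\mathbf{a}\gneq\mathbf{a}'$ and $a_i=a'_i$, then $u_i(\mathbf{a})>u_i(\mathbf{a}')$. *)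

(* Outcomes are row vectors 'rV[R]_n
   (a normed module, so its topology is the usual one on R^n). *)
From HB Require Import structures.
From mathcomp Require Import all_boot all_order all_algebra.
From mathcomp Require Import all_classical all_reals all_analysis.
Set Implicit Arguments. Unset Strict Implicit. Unset Printing Implicit Defensive.
Import Order.TTheory GRing.Theory Num.Theory.
Import numFieldNormedType.Exports.
Local Open Scope classical_set_scope.
Local Open Scope ring_scope.

Section Defs.
Variables (R : realType) (n : nat).
Notation V := 'rV[R]_n.

Definition cmp (x : V) (i : 'I_n) : R := x ord0 i.

Definition cube : set V := [set x | forall i, 0 <= cmp x i <= 1].

Definition vle (x y : V) : Prop := forall i, cmp x i <= cmp y i.
Definition vgneq (x y : V) : Prop := vle y x /\ exists j, cmp y j < cmp x j.

Definition concave_on_cube (u : V -> V) : Prop :=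
  forall x y (t : R), cube x -> cube y -> 0 <= t <= 1 ->
    forall i, t * cmp (u x) i + (1 - t) * cmp (u y) i
              <= cmp (u (t *: x + (1 - t) *: y)) i.

Definition pos_externalities (u : V -> V) : Prop :=
  forall a a' i, cube a -> cube a' -> vgneq a a' -> cmp a i = cmp a' i ->
    cmp (u a') i < cmp (u a) i.

Definition utility (u : V -> V) : Prop :=
  [/\ (forall x, cube x -> cube (u x)),
      {within cube, continuous u},
      concave_on_cube u & pos_externalities u].

Definition Dset (u : V -> V) (a : V) : set V :=
  [set a' | cube a' /\ vle (u a') (u a)].

Definition path_in (A : set V) (x y : V) : Prop :=
  exists f : R -> V, [/\ {within `[0, 1], continuous f},
    (forall t, 0 <= t <= 1 -> A (f t)), f 0 = x & f 1 = y].

Definition path_component_of (A K : set V) : Prop :=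
  exists2 y, A y & K = [set z | path_in A y z].

End Defs.

From HB Require Import structures.
From mathcomp Require Import all_boot all_order all_algebra.
From mathcomp Require Import all_classical all_reals all_analysis.
From mathcomp Require Import lra.
Set Implicit Arguments. Unset Strict Implicit.
Import Order.TTheory GRing.Theory Num.Theory.
Import numFieldNormedType.Exports.
Local Open Scope classical_set_scope.
Local Open Scope ring_scope.

(* Take for [C] the agents whose utility at [x] already equals their utility
   at [a].  If some agent [i] outside [C] had [x_i > 0], lower [x_i] a little.
   By continuity [u_i] stays below [u_i(a)], and by positive externalities every
   other agent's utility strictly decreases; so the whole segment stays in
   [D_a], it can be appended to a path reaching [x], and its endpoint is a
   point of [K] strictly below [x]. *)

Section Coordinates.
Context {R : realType} {n : nat}.
Implicit Types (x : 'rV[R]_n) (c : R) (i j : 'I_n).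

Lemma normr_cmp_le x i : `|cmp x i| <= `|x|.
Proof.
rewrite /cmp; change `|x| with (mx_norm x); rewrite mx_normrE.
exact: (le_bigmax _ _ (ord0, i)).
Qed.

Lemma cmp_subZdelta x c i j :
  cmp (x - c *: delta_mx 0 i) j = cmp x j - c * (j == i)%:R.
Proof. by rewrite /cmp !mxE. Qed.

Lemma cube_subZdelta x c i :
  cube x -> 0 <= c <= cmp x i -> cube (x - c *: delta_mx 0 i).
Proof.
move=> cx /andP[c0 cxi] j; rewrite cmp_subZdelta.
have [->|_] := eqVneq j i; last by rewrite mulr0 subr0.
by have /andP[? ?] := cx i; rewrite mulr1; apply/andP; split; lra.
Qed.

Lemma vgneq_subZdelta x c i : 0 < c -> vgneq x (x - c *: delta_mx 0 i).
Proof.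
move=> c0; split; last by exists i; rewrite cmp_subZdelta eqxx mulr1; lra.
move=> j; rewrite cmp_subZdelta.
have : 0 <= c * (j == i)%:R by rewrite mulr_ge0 ?ler0n ?ltW.
lra.
Qed.

End Coordinates.

Section Topology.
Context {R : realType} {n : nat}.
Notation V := 'rV[R]_n.

Lemma within_continuous_cmp_lt (A : set V) (f : V -> V) x i r :
  {within A, continuous f} -> A x -> cmp (f x) i < r ->
  exists2 d, 0 < d & forall y, A y -> `|x - y| < d -> cmp (f y) i < r.
Proof.
move=> /subspace_continuousP fc Ax fxr.
have /cvgr_dist_lt /(_ (r - cmp (f x) i)) := fc x Ax.
rewrite subr_gt0 => /(_ fxr) /nbhs_normP [d d0 near_x].
exists d => // y Ay xy.
have := le_lt_trans (normr_cmp_le (f x - f y) i) (near_x y xy Ay).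
by rewrite /cmp !mxE ltr_norml => /andP[? ?]; lra.
Qed.

Lemma within_continuous_comp (f : R -> V) (h : R -> R) :
  {within `[0, 1], continuous f} -> continuous h ->
  (forall t, 0 <= t <= 1 -> 0 <= h t <= 1) ->
  {within `[0, 1], continuous (f \o h)}.
Proof.
move=> /subspace_continuousP fc hc h01; apply/subspace_continuousP => t t01.
have ht01 : `[0, 1]%classic (h t) by move: t01; rewrite /= !in_itv /= => /h01.
apply: cvg_trans (fc _ ht01) => P /(hc t) Ph.
have Ph' : nbhs t (fun s => `[0, 1]%classic (h s) -> P (f (h s))) := Ph.
change (nbhs t (fun s => `[0, 1]%classic s -> P (f (h s)))).
apply: filterS Ph' => s Ps s01; apply: Ps.
by move: s01; rewrite /= !in_itv /= => /h01.
Qed.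

(* The concatenated path runs through the old one at double speed, via
   [min (2 t) 1], and then along the segment. *)
Lemma path_in_extend (A : set V) x y w :
  path_in A x y -> (forall s, 0 <= s <= 1 -> A (y + s *: w)) ->
  path_in A x (y + w).
Proof.
move=> [f [fc fA f0 f1]] Aseg.
pose h t : R := Num.min (2 * t) 1.
have hc : continuous h.
  move=> t; apply: (@continuous_min _ _ (fun t : R => 2 * t) (fun=> 1)).
    by apply: cvgM; [exact: cvg_cst | exact: cvg_id].
  exact: cvg_cst.
have h01 t : 0 <= t <= 1 -> 0 <= h t <= 1.
  move=> /andP[? ?]; rewrite /h.
  by have [?|?] := leP (2 * t) 1; apply/andP; split; lra.
exists (fun t => f (h t) + (2 * t - h t) *: w); split.
- apply: (@within_continuousD _ _ _ _ (f \o h)).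
    exact: within_continuous_comp.
  apply: continuous_subspaceT => t; apply: cvgZ; last exact: cvg_cst.
  apply: cvgB; last exact: hc.
  by apply: cvgM; [exact: cvg_cst | exact: cvg_id].
- move=> t /andP[t0 t1]; rewrite /h; have [h2t|h2t] := leP (2 * t) 1.
    by rewrite subrr scale0r addr0; apply: fA; apply/andP; split; lra.
  by rewrite f1; apply: Aseg; apply/andP; split; lra.
- by rewrite /h mulr0 min_l ?ler01 // subrr scale0r addr0 f0.
- have le12 : (1 : R) <= 2 by lra.
  rewrite /h mulr1 min_r // (_ : 2 - 1 = 1) ?scale1r ?f1 //; lra.
Qed.

Lemma path_component_sub (A K : set V) : path_component_of A K -> K `<=` A.
Proof. by move=> [y _ ->] z [f [_ fA _ <-]]; apply: fA; rewrite ler01 lexx. Qed.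

End Topology.

Lemma Dset_subZdelta (R : realType) (n : nat) (u : 'rV[R]_n -> 'rV[R]_n)
    (a x : 'rV[R]_n) (i : 'I_n) :
  {within @cube R n, continuous u} -> pos_externalities u -> Dset u a x ->
  cmp (u x) i < cmp (u a) i -> 0 < cmp x i ->
  exists2 c, 0 < c & forall s, 0 <= s <= c -> Dset u a (x - s *: delta_mx 0 i).
Proof.
move=> uc upe [cx uxa] uxi xi0.
have [d d0 near_x] := within_continuous_cmp_lt uc cx uxi.
pose e := delta_mx 0 i : 'rV[R]_n.
have e1 : 0 < `|e| + 1 by rewrite ltr_pwDr ?normr_ge0.
(* [`|e| + 1] is a positive bound on [`|e|]; its exact value is irrelevant. *)
pose c := Num.min (cmp x i) (d / (`|e| + 1)).
have c0 : 0 < c by rewrite lt_min xi0 divr_gt0.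
have cd : c * (`|e| + 1) <= d by rewrite -ler_pdivlMr // ge_min lexx orbT.
exists c => // s /andP[s0 sc].
have cy : cube (x - s *: e).
  by apply: cube_subZdelta => //; rewrite s0 (le_trans sc) // ge_min lexx.
have [->|s_neq0] := eqVneq s 0; first by rewrite scale0r subr0.
have s_gt0 : 0 < s by rewrite lt_neqAle eq_sym s_neq0.
split => // j; have [->|ji] := eqVneq j i.
  apply/ltW/near_x => //.
  rewrite opprB addrC subrK normrZ ger0_norm //.
  have : s * `|e| <= c * `|e| by rewrite ler_wpM2r ?normr_ge0.
  have := normr_ge0 e; lra.
apply/ltW/(lt_le_trans _ (uxa j))/upe => //; first exact: vgneq_subZdelta.
by rewrite cmp_subZdelta (negbTE ji) mulr0 subr0.
Qed.

Theorem claim6 (R : realType) (n : nat) (u : 'rV[R]_n -> 'rV[R]_n)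
  (hu : utility u) (a : 'rV[R]_n) (ha : cube a) (K : set 'rV[R]_n)
  (hK : path_component_of (Dset u a) K) (x : 'rV[R]_n) (hx : K x)
  (hlow : ~ exists x', K x' /\ vgneq x x') :
  exists C : {set 'I_n},
    (forall i, i \in C -> cmp (u x) i = cmp (u a) i) /\
    (forall i, i \notin C -> cmp x i = 0).
Proof.
case: hu => _ uc _ upe.
have [cx uxa] := path_component_sub hK hx.
exists [set i | cmp (u x) i == cmp (u a) i]%SET; split => i; rewrite inE.
  by move/eqP.
move=> uxi_neq; have uxi : cmp (u x) i < cmp (u a) i.
  by rewrite lt_neqAle uxi_neq uxa.
apply/eqP; rewrite eq_le (andP (cx i)).1 andbT leNgt; apply/negP => xi0.
have [c c0 Dlow] := Dset_subZdelta uc upe (conj cx uxa) uxi xi0.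
apply: hlow; exists (x - c *: delta_mx 0 i); split; last exact: vgneq_subZdelta.
case: hK hx => y _ -> hx; apply: path_in_extend hx _ => s /andP[s0 s1].
rewrite scalerN scalerA; apply: Dlow; have c0' := ltW c0.
by rewrite mulr_ge0 //= ler_piMl.
Qed.
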